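(* Let $P=P_0\cup P_m$ be a finite poset with $P_0\cap P_m=\emptyset$, where $P_m=\{x_1,\dots,x_m\}$, and put $P_i=\{x_1,\dots,x_i\}$ for $i=1,\dots,m$ (and regard $P_0\cup P_i$ as induced subposets of $P$). Then $$\mathcal{F}(P)\cong(\cdots((\mathcal{F}(P_0)\boxplus\mathcal{F}((P_0\cup P_1)*x_1))\boxplus\mathcal{F}((P_0\cup P_2)*x_2))\boxplus\cdots\boxplus\mathcal{F}((P_0\cup P_{m-1})*x_{m-1}))\boxplus\mathcal{F}((P_0\cup P_m)*x_m),$$ that is, there are lattices $L_0=\mathcal{F}(P_0),L_1,\dots,L_m$ with $L_m\cong\mathcal{F}(P)$ such that for each $i$, $L_i=L_{i-1}\boxplus K_i$ for some cutting $K_i$ of $L_{i-1}$ with $K_i\cong\mathcal{F}((P_0\cup P_i)*x_i)$.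
   Context: For a finite poset $P$, $\mathcal{F}(P)$ is the set of filters (up-sets) of $P$ ordered by reverse inclusion; it is a finite distributive lattice with least element $P$ and greatest element $\emptyset$, and $\mathcal{F}(\emptyset)$ is the one-element lattice. A cutting of a finite distributive lattice $L$ is an interval $K=[\hat0_K,\hat1_K]$ of $L$ such that every maximal chain of $L$ meets $K$. Every finite distributive lattice is isomorphic to some $\mathcal{F}(Q)$. For a cutting $K$ of $L=\mathcal{F}(Q)$, let $S=\hat0_K\setminus\hat1_K$, $S_0$ the set of maximal elements of $Q\setminus\hat0_K$, $S_1$ the set of minimal elements of $\hat1_K$. The poset $Q_K$ is $Q\cup\{x_K\}$ ($x_K$ new) where the order on $Q$ is unchanged, $z<x_K$ iff $z\le s$ for some $s\in S_0$, $x_K<y$ iff $y\ge s$ for some $s\in S_1$, and $x_K$ is incomparable to every element of $S$. The convex expansion is $L\boxplus K:=\mathcal{F}(Q_K)$. For a poset $Q$ and element $x$, $Q*x$ is the induced subposet of elements of $Q$ incomparable to $x$. *)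

From mathcomp Require Import all_boot.
Set Implicit Arguments. Unset Strict Implicit. Unset Printing Implicit Defensive.

(* A finite "poset presentation": an ambient finite type, a domain (the
   elements of the poset, allowing induced subposets) and the order relation
   (only its restriction to the domain matters). *)
Record fposet := FPoset { car : finType; dom : {set car}; ord : rel car }.

(* F(Q): the filters (up-sets) of Q.  F(Q) is ordered by REVERSE inclusion:
   X <= Y in F(Q) iff Y \subset X. *)
Definition filters (Q : fposet) : {set {set car Q}} :=
  [set A : {set car Q} | (A \subset dom Q) &&
     [forall x in dom Q, forall y in dom Q,
        (x \in A) && @ord Q x y ==> (y \in A)]].

Definition is_chain (Q : fposet) (C : {set {set car Q}}) : Prop :=
  C \subset filters Q /\
  forall X Y, X \in C -> Y \in C -> X \subset Y \/ Y \subset X.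

Definition maximal_chain (Q : fposet) (C : {set {set car Q}}) : Prop :=
  @is_chain Q C /\ forall C', @is_chain Q C' -> C \subset C' -> C' = C.

(* the interval [a, b] of F(Q) (bottom a, top b; a <= b means b \subset a) *)
Definition interval (Q : fposet) (a b : {set car Q}) : {set {set car Q}} :=
  [set X in filters Q | (b \subset X) && (X \subset a)].

Definition is_cutting (Q : fposet) (a b : {set car Q}) : Prop :=
  [/\ a \in filters Q, b \in filters Q, b \subset a &
   forall C, @maximal_chain Q C -> exists2 X, X \in C & X \in @interval Q a b].

Definition S0 (Q : fposet) (a : {set car Q}) : {set car Q} :=
  [set s in dom Q :\: a | [forall t in dom Q :\: a, @ord Q s t ==> (t == s)]].
Definition S1 (Q : fposet) (b : {set car Q}) : {set car Q} :=
  [set s in b | [forall t in b, @ord Q t s ==> (t == s)]].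

(* order of Q_K, new element x_K = None *)
Definition expand_rel (Q : fposet) (a b : {set car Q}) :
  rel (option (car Q)) := fun u v =>
  match u, v with
  | Some z, Some y => @ord Q z y
  | Some z, None => [exists s in @S0 Q a, @ord Q z s]
  | None, Some y => [exists s in @S1 Q b, @ord Q s y]
  | None, None => true
  end.

(* Q_K, so that F(Q) \boxplus [a,b] = filters (@expand Q a b) *)
Definition expand (Q : fposet) (a b : {set car Q}) : fposet :=
  @FPoset (option (car Q)) (None |: (Some @: dom Q)) (expand_rel a b).

Definition iso_lat (T U : finType) (A : {set {set T}}) (B : {set {set U}})
  : Prop :=
  exists f : {set T} -> {set U},
    [/\ forall X, X \in A -> f X \in B,
        forall Y, Y \in B -> exists2 X, X \in A & f X = Y &
        forall X Y, X \in A -> Y \in A -> (f Y \subset f X) <-> (Y \subset X)].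

(* expansion_chain Q [R_1;..;R_m] P : starting from L_0 = F(Q), there are
   cuttings K_i of L_{i-1} with K_i ~ F(R_i), L_i = L_{i-1} \boxplus K_i,
   and L_m ~ F(P). *)
Fixpoint expansion_chain (Q : fposet) (Rs : seq fposet) (P : fposet) : Prop :=
  match Rs with
  | [::] => iso_lat (filters Q) (filters P)
  | R :: Rs' => exists a b : {set car Q},
      [/\ @is_cutting Q a b, iso_lat (@interval Q a b) (filters R) &
          expansion_chain (@expand Q a b) Rs' P]
  end.

Definition incomparable (T : finType) (le : rel T) (x t : T) : bool :=
  ~~ le t x && ~~ le x t.

From mathcomp Require Import all_boot.
Set Implicit Arguments. Unset Strict Implicit. Unset Printing Implicit Defensive.

(* Induction on i, keeping an order embedding of the poset Q_i underlying L_i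
   onto P_0 \cup P_i.  To adjoin y = x_(i+1), let 0_K be the filter of the
   elements not below y and 1_K the filter of the elements above y.  Every
   element outside 0_K lies below every element of 1_K, which forces K to be
   a cutting; K \cong F(0_K \ 1_K), and 0_K \ 1_K is the set of elements
   incomparable to y; finally, in Q_K the new element x_K lies above exactly
   the elements outside 0_K and below exactly those of 1_K, so sending x_K to
   y extends the embedding onto P_0 \cup P_(i+1). *)

Lemma filtersP (Q : fposet) (X : {set car Q}) :
  reflect (X \subset dom Q /\
           {in dom Q &, forall u v, u \in X -> ord u v -> v \in X})
          (X \in filters Q).
Proof.
rewrite inE; apply: (iffP andP) => [[Xd /forall_inP Xup] | [Xd Xup]]; split=> //.
  move=> u v ud vd uX uv.
  by move: (Xup u ud) => /forall_inP/(_ v vd)/implyP; apply; rewrite uX.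
apply/forall_inP=> u ud; apply/forall_inP=> v vd.
by apply/implyP=> /andP[]; apply: Xup.
Qed.

Lemma iso_lat_trans (T U V : finType) (A : {set {set T}}) (B : {set {set U}})
  (C : {set {set V}}) : iso_lat A B -> iso_lat B C -> iso_lat A C.
Proof.
move=> [f [fAB f_onto f_mono]] [g [gBC g_onto g_mono]].
exists (g \o f); split=> [X XA | Z ZC | X Y XA YA] /=.
- exact/gBC/fAB.
- have [Y YB <-] := g_onto Z ZC; have [X XA <-] := f_onto Y YB.
  by exists X.
- exact: iff_trans (g_mono _ _ (fAB _ XA) (fAB _ YA)) (f_mono _ _ XA YA).
Qed.

Lemma exists_maximal (U : finType) (r : rel U) (D E : {set U}) :
  {in D, reflexive r} -> {in D &, antisymmetric r} ->
  {in D & &, transitive r} -> E \subset D ->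
  {in E, forall z, exists2 s, s \in E & r z s /\ {in E, forall t, r s t -> t = s}}.
Proof.
move=> r_refl r_anti r_trans /subsetP ED z zE.
pose up s := [set t in E | r s t].
have zz : (z \in E) && r z z by rewrite zE r_refl ?ED.
have [s /andP[sE zs] s_min] := @arg_minnP _ z (fun s => (s \in E) && r z s)
  (fun s => #|up s|) zz.
exists s => //; split=> // t tE st.
have zt : r z t by apply: (r_trans s); rewrite ?ED.
have up_ts : up t \subset up s.
  apply/subsetP=> v; rewrite !inE => /andP[vE tv].
  by rewrite vE (r_trans t) ?ED.
have /eqP up_t : up t == up s by rewrite eqEcard up_ts s_min ?tE.
have : s \in up t by rewrite up_t inE sE r_refl ?ED.
by rewrite inE => /andP[_ ts]; apply: r_anti; rewrite ?ED ?ts.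
Qed.

Definition partial_order_on (Q : fposet) : Prop :=
  [/\ {in dom Q, reflexive (@ord Q)}, {in dom Q &, antisymmetric (@ord Q)} &
      {in dom Q & &, transitive (@ord Q)}].

Definition order_emb (Q : fposet) (T : finType) (le : rel T)
  (phi : car Q -> T) (A : {set T}) : Prop :=
  [/\ {in dom Q &, injective phi}, phi @: dom Q = A &
      {in dom Q &, forall u v, ord u v = le (phi u) (phi v)}].

Section Filters.

Variable Q : fposet.
Implicit Types a b : {set car Q}.

Lemma cutting_of_below_above a b :
  a \in filters Q -> b \in filters Q -> b \subset a ->
  {in dom Q :\: a & b, forall d u, ord d u} -> is_cutting a b.
Proof.
move=> aF bF ba below_b; split=> // C [[CF C_chain] C_max].
have /filtersP[ad a_up] := aF; have /filtersP[bd _] := bF.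
have below_a Z : Z \in filters Q -> ~~ (b \subset Z) -> Z \subset a.
  case/filtersP=> Zd Z_up nbZ; apply/subsetP=> d dZ; apply: contraNT nbZ => da.
  have dd := subsetP Zd d dZ.
  apply/subsetP=> u ub; apply: (Z_up d) => //; first exact: (subsetP bd).
  by apply: below_b; rewrite // inE da.
(* W is comparable with every member of C, so it belongs to C by maximality. *)
pose W := a :&: \bigcap_(Z in C | b \subset Z) Z.
have WF : W \in filters Q.
  apply/filtersP; split=> [|u v ud vd]; first exact: subset_trans (subsetIl _ _) ad.
  rewrite !inE => /andP[ua /bigcapP uZ] uv; rewrite (a_up u v) //=.
  apply/bigcapP=> Z /andP[ZC bZ]; have /filtersP[_ Z_up] := subsetP CF Z ZC.
  by apply: (Z_up u) => //; apply: uZ; rewrite ZC.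
have bW : b \subset W by rewrite subsetI ba; apply/bigcapsP=> Z /andP[].
have W_comparable Z : Z \in C -> Z \subset W \/ W \subset Z.
  move=> ZC; have [bZ | nbZ] := boolP (b \subset Z).
    by right; apply: subset_trans (subsetIr _ _) (bigcap_inf _ _); rewrite ZC.
  left; rewrite subsetI below_a ?(subsetP CF) //; apply/bigcapsP=> Z' /andP[Z'C bZ'].
  have [//|Z'Z] := C_chain Z Z' ZC Z'C.
  by rewrite (subset_trans bZ' Z'Z) in nbZ.
have W_chain : is_chain (W |: C).
  split=> [|X Y]; first by apply/subsetP=> X /setU1P[-> | /(subsetP CF)].
  move=> /setU1P[-> | XC] /setU1P[-> | YC]; [by left | | exact: W_comparable |].
    by case: (W_comparable Y YC); [right | left].
  exact: C_chain.
exists W; last by rewrite inE WF bW subsetIl.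
by rewrite -(C_max _ W_chain (subsetUr _ _)) setU11.
Qed.

Lemma interval_iso_filters_setD a b :
  a \in filters Q -> b \in filters Q -> b \subset a ->
  iso_lat (interval a b) (filters (FPoset (a :\: b) (@ord Q))).
Proof.
move=> /filtersP[ad a_up] /filtersP[bd b_up] ba.
exists (fun X => X :\: b); split.
- move=> X; rewrite inE => /and3P[/filtersP[Xd X_up] bX Xa].
  apply/filtersP; split=> /= [|u v _ /setDP[va vb] /setDP[uX _] uv].
    exact: setSD.
  by rewrite inE vb (X_up u) ?(subsetP Xd u) ?(subsetP ad v).
- move=> Y /filtersP[/= Yab Y_up]; have Ya := subset_trans Yab (subsetDl a b).
  exists (Y :|: b).
    rewrite inE subsetUr subUset Ya ba !andbT; apply/filtersP.
    split=> [|u v ud vd]; first by rewrite subUset bd (subset_trans Ya ad).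
    rewrite !inE => /orP[uY | ub] uv; last by rewrite (b_up u v) ?orbT.
    have [_ | vb] := boolP (v \in b); first by rewrite orbT.
    rewrite orbF; apply: (Y_up u) => //; first exact: (subsetP Yab).
    by rewrite inE vb (a_up u) ?(subsetP Ya).
  apply/setP=> t; rewrite !inE.
  have [tb | tb] := boolP (t \in b); last by rewrite orbF.
  by apply/esym/negbTE; apply: contraL tb => /(subsetP Yab)/setDP[].
- move=> X Y; rewrite !inE => /and3P[_ bX _] /and3P[_ bY _].
  split=> [YX | ]; last exact: setSD.
  apply/subsetP=> t tY; have [/(subsetP bX) // | tb] := boolP (t \in b).
  have /(subsetP YX) : t \in Y :\: b by rewrite inE tb.
  by case/setDP.
Qed.

Lemma below_S0E a : partial_order_on Q -> a \in filters Q ->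
  {in dom Q, forall z, [exists s in S0 a, ord z s] = (z \notin a)}.
Proof.
case=> refl anti trans /filtersP[ad a_up] z zd; apply/existsP/idP.
  case=> s /andP[]; rewrite inE => /andP[/setDP[sd sa] _] zs.
  by apply: contra sa => za; apply: (a_up z).
move=> za; have zE : z \in dom Q :\: a by rewrite inE za.
have [s sE [zs s_max]] := exists_maximal refl anti trans (subsetDl _ _) zE.
exists s; rewrite zs andbT inE sE /=.
by apply/forall_inP=> t tE; apply/implyP=> st; rewrite (s_max t).
Qed.

Lemma above_S1E b : partial_order_on Q -> b \in filters Q ->
  {in dom Q, forall z, [exists s in S1 b, ord s z] = (z \in b)}.
Proof.
case=> refl anti trans /filtersP[bd b_up] z zd; apply/existsP/idP.
  case=> s /andP[]; rewrite inE => /andP[sb _] sz.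
  by apply: (b_up s) => //; apply: (subsetP bd).
move=> zb; have ge_anti : {in dom Q &, antisymmetric (fun u v => ord v u)}.
  by move=> u v ud vd; rewrite andbC; apply: anti.
have ge_trans : {in dom Q & &, transitive (fun u v => ord v u)}.
  by move=> v u w vd ud wd uv vw; apply: (trans v).
have [s sb [sz s_min]] :=
  @exists_maximal _ (fun u v => ord v u) _ _ refl ge_anti ge_trans bd z zb.
exists s; rewrite sz andbT inE sb /=.
by apply/forall_inP=> t tb; apply/implyP=> ts; rewrite (s_min t).
Qed.

End Filters.

Section OrderEmbedding.

Variables (Q : fposet) (T : finType) (le : rel T) (phi : car Q -> T) (A : {set T}).
Hypothesis phiA : order_emb le phi A.

Lemma filters_iso_order_emb : iso_lat (filters Q) (filters (FPoset A le)).
Proof.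
case: phiA => phi_inj phiQ phi_mono.
exists (fun X : {set car Q} => phi @: X); split.
- move=> X /filtersP[Xd X_up]; apply/filtersP; split=> /= [|t t'].
    by rewrite -phiQ imsetS.
  rewrite -phiQ => /imsetP[u ud ->] /imsetP[v vd ->] /imsetP[u' u'X /phi_inj eu].
  have u'd := subsetP Xd u' u'X.
  by rewrite eu // -phi_mono // => uv; apply/imset_f/(X_up u').
- move=> Y /filtersP[/= YA Y_up].
  exists [set u in dom Q | phi u \in Y].
    apply/filtersP; split=> [|u v ud vd]; first by apply/subsetP=> u /setIdP[].
    rewrite !inE ud vd /= phi_mono // => uY; apply: Y_up => //.
      by rewrite -phiQ imset_f.
    by rewrite -phiQ imset_f.
  apply/setP=> t; apply/imsetP/idP=> [[u /setIdP[_ uY] ->] // | tY].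
  have /imsetP[u ud tu] : t \in phi @: dom Q by rewrite phiQ (subsetP YA).
  by exists u; rewrite // inE ud -tu.
- move=> X Y /filtersP[Xd _] /filtersP[Yd _]; split; last exact: imsetS.
  move=> /subsetP YX; apply/subsetP=> u uY.
  have /imsetP[u' u'X /phi_inj eu] := YX _ (imset_f phi uY).
  have ud := subsetP Yd u uY; have u'd := subsetP Xd u' u'X.
  by rewrite eu.
Qed.

Lemma order_emb_restrict (B : {set car Q}) :
  B \subset dom Q -> @order_emb (FPoset B (@ord Q)) T le phi (phi @: B).
Proof.
case: phiA => phi_inj _ phi_mono /subsetP Bd.
by split=> //= u v /Bd ud /Bd vd; [apply: phi_inj | apply: phi_mono].
Qed.

Lemma order_emb_partial_order :
  reflexive le -> antisymmetric le -> transitive le -> partial_order_on Q.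
Proof.
case: phiA => phi_inj _ phi_mono le_refl le_anti le_trans.
split=> [u ud | u v ud vd | v u w vd ud wd]; rewrite !phi_mono //.
  by move/le_anti; apply: phi_inj.
exact: le_trans.
Qed.

Variables (a b : {set car Q}) (y : T).
Hypotheses (yA : y \notin A) (le_yy : le y y) (Q_po : partial_order_on Q).
Hypotheses (aF : a \in filters Q) (bF : b \in filters Q).
Hypothesis not_a_below : {in dom Q, forall z, (z \notin a) = le (phi z) y}.
Hypothesis b_above : {in dom Q, forall z, (z \in b) = le y (phi z)}.

Lemma order_emb_expand : @order_emb (expand a b) T le (oapp phi y) (y |: A).
Proof.
case: phiA => phi_inj phiQ phi_mono.
have inS z : (Some z \in None |: [set Some u | u in dom Q]) = (z \in dom Q).
  by rewrite in_setU1 /= mem_imset //; move=> p q [].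
have phi_neq_y z : z \in dom Q -> phi z != y.
  by move=> zd; apply: contraNneq yA => <-; rewrite -phiQ imset_f.
split.
- move=> [z|] [w|]; rewrite ?inS //= => zd wd.
  + by move/phi_inj->.
  + by move=> e; move: (phi_neq_y z zd); rewrite e eqxx.
  + by move=> e; move: (phi_neq_y w wd); rewrite -e eqxx.
- by rewrite imsetU1 -imset_comp -phiQ.
- move=> [z|] [w|]; rewrite ?inS //= => zd wd.
  + exact: phi_mono.
  + by rewrite below_S0E // not_a_below.
  + by rewrite above_S1E // b_above.
Qed.

End OrderEmbedding.

Section ExpansionStep.

Variables (T : finType) (le : rel T).
Hypotheses (le_refl : reflexive le) (le_anti : antisymmetric le)
  (le_trans : transitive le).
Variables (Q : fposet) (phi : car Q -> T) (A : {set T}) (y : T).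
Hypotheses (phiA : order_emb le phi A) (yA : y \notin A).

Let not_below : {set car Q} := [set u in dom Q | ~~ le (phi u) y].
Let above : {set car Q} := [set u in dom Q | le y (phi u)].

Lemma not_below_filter : not_below \in filters Q.
Proof.
case: phiA => _ _ phi_mono; apply/filtersP.
split=> [|u v ud vd]; first by apply/subsetP=> u /setIdP[].
rewrite !inE ud vd phi_mono //= => uy uv.
by apply: contra uy; apply: le_trans uv.
Qed.

Lemma above_filter : above \in filters Q.
Proof.
case: phiA => _ _ phi_mono; apply/filtersP.
split=> [|u v ud vd]; first by apply/subsetP=> u /setIdP[].
by rewrite !inE ud vd phi_mono //=; apply: le_trans.
Qed.

Lemma above_sub_not_below : above \subset not_below.
Proof.
case: phiA => _ phiQ _; apply/subsetP=> u; rewrite !inE => /andP[ud yu].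
rewrite ud /=; apply: contra yA => uy.
have -> : y = phi u by apply: le_anti; rewrite yu uy.
by rewrite -phiQ imset_f.
Qed.

Lemma image_incomparables :
  phi @: (not_below :\: above) = [set t in A | incomparable le y t].
Proof.
case: phiA => _ phiQ _; rewrite -phiQ; apply/setP=> t.
apply/imsetP/idP=> [[u] | ].
  rewrite !inE => /andP[+ /andP[ud uy]] ->; rewrite ud /= => yu.
  by rewrite imset_f // /incomparable uy yu.
rewrite inE => /andP[/imsetP[u ud ->] /andP[uy yu]].
by exists u; rewrite // !inE ud uy yu.
Qed.

Lemma expansion_step : exists a b : {set car Q},
  [/\ is_cutting a b,
      iso_lat (interval a b)
              (filters (FPoset [set t in A | incomparable le y t] le)) &
      @order_emb (expand a b) T le (oapp phi y) (y |: A)].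
Proof.
have [_ _ phi_mono] := phiA.
have notBF := not_below_filter; have abF := above_filter.
have ab := above_sub_not_below.
exists not_below, above; split.
- apply: cutting_of_below_above => // d u; rewrite !inE negb_and negbK.
  case/andP=> /orP[/negbTE-> // | dy] dd /andP[ud yu].
  by rewrite phi_mono //; apply: le_trans yu.
- apply: iso_lat_trans (interval_iso_filters_setD notBF abF ab) _.
  rewrite -image_incomparables.
  apply/filters_iso_order_emb/(order_emb_restrict phiA).
  by apply: subset_trans (subsetDl _ _) _; apply/subsetP=> u /setIdP[].
- apply: order_emb_expand => //; first exact: (order_emb_partial_order phiA).
    by move=> z zd; rewrite inE zd negbK.
  by move=> z zd; rewrite inE zd.
Qed.

End ExpansionStep.

Section InitialParts.

Variables (T : finType) (m : nat) (x : 'I_m -> T).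

(* [initial_part n] is P_0 \cup P_n, since [x j] stands for x_(j+1). *)
Definition initial_part (n : nat) : {set T} :=
  [set t | [forall j : 'I_m, (x j == t) ==> (j < n)]].

Lemma initial_part0 : initial_part 0 = [set t | t \notin codom x].
Proof.
apply/setP=> t; rewrite !inE; apply/forallP/idP => [no_x | tx j].
  by apply/codomP=> -[j ej]; move: (no_x j); rewrite ej eqxx.
by apply/implyP=> /eqP ej; rewrite -ej codom_f in tx.
Qed.

Lemma initial_part_full : initial_part m = [set: T].
Proof. by apply/setP=> t; rewrite !inE; apply/forallP=> j; rewrite ltn_ord implybT. Qed.

Lemma initial_part_notin (i : 'I_m) : x i \notin initial_part i.
Proof. by rewrite inE negb_forall; apply/existsP; exists i; rewrite eqxx ltnn. Qed.

Lemma incomparable_initial_part (le : rel T) (i : 'I_m) : reflexive le ->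
  [set t | [forall j : 'I_m, (x j == t) ==> (j <= i)] && incomparable le (x i) t]
  = [set t in initial_part i | incomparable le (x i) t].
Proof.
move=> le_refl; apply/setP=> t; rewrite !inE.
have [inc | _] := boolP (incomparable le (x i) t); last by rewrite !andbF.
rewrite !andbT; apply: eq_forallb => j; case: eqP => //= ej.
have ji : (j : nat) != i.
  by apply: contraTneq inc => /val_inj eji; rewrite -ej eji /incomparable le_refl.
by rewrite leq_eqVlt (negbTE ji).
Qed.

Hypothesis x_inj : injective x.

Lemma initial_partS (i : 'I_m) : x i |: initial_part i = initial_part i.+1.
Proof.
apply/setP=> t; rewrite !inE; case: eqP => [-> | tx] /=.
  by apply/esym/forallP=> j; apply/implyP=> /eqP/x_inj->.
apply: eq_forallb => j; case: eqP => //= ej.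
have ji : (j : nat) != i by apply: contra_not_neq tx => /val_inj <-.
by rewrite ltnS [in RHS]leq_eqVlt (negbTE ji).
Qed.

End InitialParts.

Lemma expansion_chain_initial_parts (T : finType) (le : rel T)
  (le_refl : reflexive le) (le_anti : antisymmetric le)
  (le_trans : transitive le) (m : nat) (x : 'I_m -> T) (x_inj : injective x)
  (k n : nat) (Q : fposet) (phi : car Q -> T) :
  n + k = m -> order_emb le phi (initial_part x n) ->
  expansion_chain Q
    [seq FPoset [set t in initial_part x i | incomparable le (x i) t] le
       | i : 'I_m <- drop n (enum 'I_m)]
    (FPoset [set: T] le).
Proof.
elim: k n Q phi => [|k IH] n Q phi.
  rewrite addn0 => n_eq_m; rewrite drop_oversize ?size_enum_ord ?n_eq_m //.
  by rewrite initial_part_full; apply: filters_iso_order_emb.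
move=> nkm phiA; have lt_nm : n < m by rewrite -nkm addnS ltnS leq_addr.
pose i := Ordinal lt_nm.
rewrite (drop_nth i) ?size_enum_ord //.
have -> : nth i (enum 'I_m) n = i by apply: (nth_ord_enum i i).
have [a [b [cut iso emb]]] :=
  expansion_step le_refl le_anti le_trans phiA (initial_part_notin x i).
exists a, b; split=> //; rewrite (initial_partS x_inj i) in emb.
by move: emb; apply: IH; rewrite addSnnS.
Qed.

Theorem corollary1 (T : finType) (le : rel T)
  (le_refl : reflexive le) (le_anti : antisymmetric le)
  (le_trans : transitive le)
  (m : nat) (x : 'I_m -> T) (x_inj : injective x) :
  expansion_chain
    (FPoset [set t : T | t \notin codom x] le)
    [seq FPoset [set t : T | [forall j : 'I_m, (x j == t) ==> (j <= i)]
                              && incomparable le (x i) t] le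
       | i : 'I_m <- enum 'I_m]
    (FPoset [set: T] le).
Proof.
under eq_map do rewrite incomparable_initial_part //.
have id_emb :
    @order_emb (FPoset (initial_part x 0) le) T le id (initial_part x 0).
  by split=> //=; rewrite imset_id.
rewrite -initial_part0.
have := expansion_chain_initial_parts le_refl le_anti le_trans x_inj
  (add0n m) id_emb.
by rewrite drop0.
Qed.
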